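(* Let $q$ be a prime power, let $F_1\subsetneq F_0\subseteq\mathbb{F}_q^n$ be linear codes of dimensions $f_1<f_0$, and let $G_E\in\mathbb{F}_q^{e\times n}$ be a matrix (not necessarily of full rank) with row space $E$ such that $F_0\cap E=\{\underline{0}\}$. Let $0\le u\le e$, $v=e-u$, and write $G_E=\begin{bmatrix}G_U\\ G_V\end{bmatrix}$ with $G_U$ the first $u$ rows and $G_V$ the last $v$ rows; let $U$ and $V$ be the row spaces of $G_U$ and $G_V$. Consider the QSS scheme on $n+e$ parties given by the extended CSS code $\mathrm{ECSS}(F_0,F_1,G_E)$ (party $j$ holding the $j$-th encoded qudit). Define $$\tau_u=n-\min\{\mathrm{wt}((F_0+V)\setminus(F_1+V)),\ \mathrm{wt}((F_1+U)^\perp\setminus(F_0+U)^\perp)\}+1.$$ Then for an integer $0\le\tau\le n$, the set $J\cup\{n+1,n+2,\dots,n+u\}$ is authorized for every $J\subseteq[n]$ with $|J|=\tau$ if and only if $\tau\geq\tau_u$.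
   Context: For linear codes $L_1\subsetneq L_0\subseteq\mathbb{F}_q^n$, $\mathrm{wt}(L_0\setminus L_1)=\min\{\mathrm{wt}(\underline{c}):\underline{c}\in L_0,\ \underline{c}\notin L_1\}$ (Hamming weight); $L^\perp$ is the dual code. For a generator matrix $G_{F_0}=\begin{bmatrix}G_{F_0/F_1}\\ G_{F_1}\end{bmatrix}$ of $F_0$ with $G_{F_1}$ a generator matrix of $F_1$ and $G_{F_0/F_1}$ generating a complement of $F_1$ in $F_0$, the extended CSS code $\mathrm{ECSS}(F_0,F_1,G_E)$ is the CSS code of $C_0$ over $C_1$, where $C_0,C_1\subseteq\mathbb{F}_q^{n+e}$ are generated by $\begin{bmatrix}G_{F_0}&0\\ G_E&I_e\end{bmatrix}$ and $\begin{bmatrix}G_{F_1}&0\\ G_E&I_e\end{bmatrix}$ respectively. Its encoding maps, up to normalization and extended linearly, a basis state $|\underline{s}\rangle$, $\underline{s}\in\mathbb{F}_q^{f_0-f_1}$, to $$\sum_{\underline{r}_1\in\mathbb{F}_q^{f_1},\,\underline{r}_2\in\mathbb{F}_q^{e}}\Big|[\,G_{F_0/F_1}^T\ G_{F_1}^T\ G_E^T\,]\begin{bmatrix}\underline{s}\\ \underline{r}_1\\ \underline{r}_2\end{bmatrix}\Big\rangle|\underline{r}_2\rangle,$$ a state of $n+e$ qudits of dimension $q$; qudit $j$ is given to party $j\in[n+e]$. In a QSS scheme, a set of parties is authorized if the secret can be recovered from their shares (and unauthorized if their shares contain no information about the secret). *)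

From HB Require Import structures.
From mathcomp Require Import all_boot all_order all_algebra.
Set Implicit Arguments. Unset Strict Implicit. Unset Printing Implicit Defensive.
Import Order.TTheory GRing.Theory Num.Theory.
Local Open Scope ring_scope.

Definition wt (F : finFieldType) (n : nat) (x : 'rV[F]_n) : nat :=
  #|[set j : 'I_n | x 0 j != 0]|.

(* wt(L0 \ L1) = min{ wt c : c in L0, c notin L1 } where L0, L1 are the row
   spaces of the matrices L0, L1 (default n.+1 if the set is empty, which never
   happens under the hypotheses of the theorem). *)
Definition wt_diff (F : finFieldType) (n m0 m1 : nat)
    (L0 : 'M[F]_(m0, n)) (L1 : 'M[F]_(m1, n)) : nat :=
  \big[minn/n.+1]_(c : 'rV[F]_n | (c <= L0)%MS && ~~ (c <= L1)%MS) wt c.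

Definition dual (F : finFieldType) (n m : nat) (L : 'M[F]_(m, n)) : 'M[F]_n :=
  kermx L^T.

(* tau_u, where F0 = rowspace [GS; G1], F1 = rowspace G1, U = rowspace GU,
   V = rowspace GV. *)
Definition tau_u (F : finFieldType) (n k f1 u v : nat)
    (GS : 'M[F]_(k, n)) (G1 : 'M[F]_(f1, n))
    (GU : 'M[F]_(u, n)) (GV : 'M[F]_(v, n)) : nat :=
  (n - minn (wt_diff (col_mx GS G1 + GV)%MS (G1 + GV)%MS)
            (wt_diff (dual (G1 + GU)%MS) (dual (col_mx GS G1 + GU)%MS)) + 1)%N.

(* Operators on the space with orthonormal basis indexed by a finType S are
   represented by their matrix entries  rho s t = <s| rho |t>. *)

(* Amplitude <x| Enc |s> of the (unnormalized) ECSS encoding of basis state |s>: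
   sum_{r1, r2} | s GS + r1 G1 + r2 GE >|r2>. *)
Definition ecss_amp (C : numClosedFieldType) (F : finFieldType) (n k f1 e : nat)
    (GS : 'M[F]_(k, n)) (G1 : 'M[F]_(f1, n)) (GE : 'M[F]_(e, n))
    (s : 'rV[F]_k) (x : 'rV[F]_(n + e)) : C :=
  \sum_(r1 : 'rV[F]_f1) \sum_(r2 : 'rV[F]_e)
     (nat_of_bool (x == row_mx (s *m GS + r1 *m G1 + r2 *m GE) r2))%:R.

Definition ecss_enc (C : numClosedFieldType) (F : finFieldType) (n k f1 e : nat)
    (GS : 'M[F]_(k, n)) (G1 : 'M[F]_(f1, n)) (GE : 'M[F]_(e, n))
    (rho : 'rV[F]_k -> 'rV[F]_k -> C) (x y : 'rV[F]_(n + e)) : C :=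
  ((#|F|%:R : C) ^+ (f1 + e))^-1 *
  \sum_(s : 'rV[F]_k) \sum_(t : 'rV[F]_k)
     ecss_amp C GS G1 GE s x * rho s t * (ecss_amp C GS G1 GE t y)^*.

Definition labels (F : finFieldType) (N : nat) (A : {set 'I_N}) : finType :=
  {ffun {i : 'I_N | i \in A} -> F}.

Definition restr (F : finFieldType) (N : nat) (A : {set 'I_N}) (x : 'rV[F]_N) :
    labels F A := [ffun i => x 0 (val i)].

Definition ptrace (C : numClosedFieldType) (F : finFieldType) (N : nat)
    (A : {set 'I_N}) (sigma : 'rV[F]_N -> 'rV[F]_N -> C) (a b : labels F A) : C :=
  \sum_(x : 'rV[F]_N | restr A x == a)
    \sum_(y : 'rV[F]_N | (restr A y == b) &&
                         [forall j : 'I_N, (j \notin A) ==> (x 0 j == y 0 j)])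
      sigma x y.

Definition is_density (C : numClosedFieldType) (S : finType) (rho : S -> S -> C) : Prop :=
  (forall w : S -> C, 0 <= \sum_(s : S) \sum_(t : S) (w s)^* * rho s t * w t) /\
  \sum_(s : S) rho s s = 1.

(* A quantum channel (CPTP map) from operators on L to operators on S, given by
   Kraus operators K k : L -> S with entries K k s l = <s| K_k |l>. *)
Definition kraus_tp (C : numClosedFieldType) (L S : finType) (m : nat)
    (K : 'I_m -> S -> L -> C) : Prop :=
  forall l l' : L, \sum_(k < m) \sum_(s : S) (K k s l)^* * K k s l' = (nat_of_bool (l == l'))%:R.

Definition kraus_apply (C : numClosedFieldType) (L S : finType) (m : nat)
    (K : 'I_m -> S -> L -> C) (sigma : L -> L -> C) (s t : S) : C :=
  \sum_(k < m) \sum_(l : L) \sum_(l' : L) K k s l * sigma l l' * (K k t l')^*.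

Definition authorized (C : numClosedFieldType) (F : finFieldType) (n k f1 e : nat)
    (GS : 'M[F]_(k, n)) (G1 : 'M[F]_(f1, n)) (GE : 'M[F]_(e, n))
    (A : {set 'I_(n + e)}) : Prop :=
  exists (m : nat) (K : 'I_m -> 'rV[F]_k -> labels F A -> C),
    kraus_tp K /\
    forall rho : 'rV[F]_k -> 'rV[F]_k -> C, is_density rho ->
      forall s t, kraus_apply K (@ptrace C F _ A (ecss_enc GS G1 GE rho)) s t = rho s t.

(* The party set J \cup {n+1, ..., n+u} (0-indexed: J and n, ..., n+u-1). *)
Definition parties_Ju (n u v : nat) (J : {set 'I_n}) : {set 'I_(n + (u + v))} :=
  [set lshift (u + v) j | j in J] :|: [set rshift n (lshift v i) | i : 'I_u].

From HB Require Import structures.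
From mathcomp Require Import all_boot all_order all_algebra.
From mathcomp Require Import zify ring.
Set Implicit Arguments. Unset Strict Implicit. Unset Printing Implicit Defensive.
Import Order.TTheory GRing.Theory Num.Theory.
Local Open Scope ring_scope.

(* Write a codeword of ECSS(F0, F1, G_E) as (s G_S + r1 G_1 + r2 G_E | r2).
   A party set A is authorized as soon as the secret s is a linear function of
   the A-part of the codeword and some codeword of secret s, linear in s,
   vanishes outside A: reading s off the shares and subtracting that codeword
   leaves a residue independent of the secret. Conversely, a codeword of secret
   d <> 0 vanishing on A makes |0> and |d> look alike to A, and a secret d <> 0
   such that no codeword of secret 0 agrees outside A with one of secret d
   makes A unable to distinguish a superposition of |0> and |d> from their
   mixture. For A = J u {n+1, ..., n+u} (the randomness on U is seen by A, that
   on V is not), and using duality for the second condition, these say that J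
   meets the support of every word of F0+V outside F1+V and of every word of
   (F1+U)^perp outside (F0+U)^perp. Finally, every tau-subset of [n] meets the
   supports of all words of a set P iff tau > n - min {wt c | c in P}. *)

Section TransposedKernel.
Variable F : fieldType.

Lemma kermx_trS m a b (A : 'M[F]_(a, m)) (B : 'M[F]_(b, m)) :
  (B <= A)%MS -> (kermx A^T <= kermx B^T)%MS.
Proof.
by case/submxP=> D ->; apply/sub_kermxP; rewrite trmx_mul mulmxA mulmx_ker mul0mx.
Qed.

Lemma sub_kermx_tr m a b (A : 'M[F]_(a, m)) (B : 'M[F]_(b, m)) :
  (kermx A^T <= kermx B^T)%MS = (B <= A)%MS.
Proof.
apply/idP/idP=> [/sub_kermxP kerAB|]; last exact: kermx_trS.
set L := kermx A^T.
have annihilated X : X *m L^T = 0 -> (X <= kermx L^T)%MS by move/sub_kermxP.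
have sAL : (A <= kermx L^T)%MS.
  by apply: annihilated; rewrite -[A]trmxK -trmx_mul mulmx_ker trmx0.
have sBL : (B <= kermx L^T)%MS.
  by apply: annihilated; rewrite -[B]trmxK -trmx_mul kerAB trmx0.
have /eqmxP -> // : (A == kermx L^T)%MS.
rewrite -(mxrank_leqif_eq sAL) eqn_leq (mxrankS sAL) /=.
rewrite mxrank_ker mxrank_tr /L mxrank_ker mxrank_tr.
by have := rank_leq_col A; lia.
Qed.

Lemma mulmx_solvable p q r (X : 'M[F]_(p, q)) (T : 'M[F]_(p, r)) :
  (kermx X <= kermx T)%MS -> exists Y, X *m Y = T.
Proof.
move=> kerXT; have /submxP[D defT] : (T^T <= X^T)%MS by rewrite -sub_kermx_tr !trmxK.
by exists D^T; rewrite -[T]trmxK defT trmx_mul trmxK.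
Qed.

End TransposedKernel.

Lemma exists_subset_card (T : finType) (B : {set T}) t :
  (t <= #|B|)%N -> exists2 J : {set T}, #|J| = t & J \subset B.
Proof.
case/card_geqP=> s [uniq_s size_s sub_s].
exists [set x in s]; last by apply/subsetP=> x; rewrite inE => /sub_s.
by rewrite cardsE (card_uniqP uniq_s).
Qed.

Section Supports.
Variables (F : finFieldType) (n : nat).
Implicit Types (c : 'rV[F]_n) (J : {set 'I_n}).

Definition supp c : {set 'I_n} := [set j | c 0 j != 0].

Lemma wt_le_dim c : (wt c <= n)%N.
Proof. by apply: leq_trans (max_card _) _; rewrite card_ord. Qed.

Lemma card_compl_supp c : #|~: supp c| = (n - wt c)%N.
Proof. by rewrite cardsCs setCK card_ord. Qed.

Lemma subset_compl_suppP J c :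
  reflect (forall j, j \in J -> c 0 j = 0) (J \subset ~: supp c).
Proof.
apply: (iffP subsetP) => [sub j /sub | vanish j /vanish cj0]; rewrite !inE negbK.
  by move/eqP.
by rewrite cj0.
Qed.

Lemma orth_complementary_supports J (y c : 'rV[F]_n) :
  (forall j, j \in J -> y 0 j = 0) -> (forall j, j \notin J -> c 0 j = 0) -> y *m c^T = 0.
Proof.
move=> y0 c0; apply/rowP => i; rewrite ord1 !mxE big1 // => j _; rewrite !mxE.
by case: (boolP (j \in J)) => [/y0 -> | /c0 ->]; rewrite ?mul0r ?mulr0.
Qed.

Definition meets_supports J (P : pred 'rV[F]_n) :=
  forall c, P c -> ~~ (J \subset ~: supp c).

Lemma meets_supports_card (P : pred 'rV[F]_n) tau : (tau <= n)%N ->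
  (forall J, #|J| = tau -> meets_supports J P) <->
  (n < tau + \big[minn/n.+1]_(c | P c) wt c)%N.
Proof.
move=> le_tau_n; rewrite -ltn_subLR // -minEnat.
split=> [meets | /(@bigmin_gtP _ nat)[_ wt_gt] J card_J c Pc].
  apply/(@bigmin_gtP _ nat); split=> [|c Pc]; rewrite ltEnat /=.
    by rewrite ltnS leq_subr.
  rewrite ltnNge; apply/negP=> le_wt.
  have [|J card_J sub_J] := @exists_subset_card _ (~: supp c) tau.
    by rewrite card_compl_supp; lia.
  by have /negP := meets J card_J c Pc.
apply/negP=> /subset_leq_card; rewrite card_J card_compl_supp.
by have := wt_gt c Pc; have := wt_le_dim c; rewrite ltEnat /=; lia.
Qed.

Definition code_diff m0 m1 (L0 : 'M[F]_(m0, n)) (L1 : 'M[F]_(m1, n)) : pred 'rV[F]_n :=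
  fun c => (c <= L0)%MS && ~~ (c <= L1)%MS.

Lemma meets_code_diff_card m0 m1 (L0 : 'M[F]_(m0, n)) (L1 : 'M[F]_(m1, n)) tau :
  (tau <= n)%N ->
  (forall J, #|J| = tau -> meets_supports J (code_diff L0 L1)) <->
  (n < tau + wt_diff L0 L1)%N.
Proof. exact: meets_supports_card. Qed.

Lemma meets_code_diff_sub J m0 m1 (L0 : 'M[F]_(m0, n)) (L1 : 'M[F]_(m1, n)) c :
  meets_supports J (code_diff L0 L1) -> (forall j, j \in J -> c 0 j = 0) ->
  (c <= L0)%MS -> (c <= L1)%MS.
Proof.
move=> meets vanish cL0; apply/negPn/negP => ncL1.
by have /negP[] := meets c (introT andP (conj cL0 ncL1)); apply/subset_compl_suppP.
Qed.

Lemma wt_diff_le m0 m1 (L0 : 'M[F]_(m0, n)) (L1 : 'M[F]_(m1, n)) c :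
  code_diff L0 L1 c -> (wt_diff L0 L1 <= wt c)%N.
Proof. by move=> diff_c; rewrite /wt_diff -minEnat; apply: (@bigmin_le_cond _ nat). Qed.

End Supports.

Lemma sum_delta (R : pzSemiRingType) (T : finType) (c : T) (H : T -> R) :
  \sum_(x : T) (x == c)%:R * H x = H c.
Proof.
by rewrite (bigD1 c) //= eqxx mul1r big1 ?addr0 // => x /negbTE ->; rewrite mul0r.
Qed.

Lemma sum_shift_eq (R : pzSemiRingType) (V : finZmodType) (a b : V) :
  \sum_(x : V) \sum_(y : V) (x - a == y - b)%:R = #|V|%:R :> R.
Proof.
transitivity (\sum_(x : V) (1 : R)); last by rewrite sumr_const.
apply: eq_bigr => x _; rewrite -[RHS](sum_delta (x - a + b) (fun=> 1)).
by apply: eq_bigr => y _; rewrite eq_sym subr_eq mulr1.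
Qed.

Lemma exchange_big_pair (R : nmodType) (I J K L : finType) (f : I -> J -> K -> L -> R) :
  \sum_i \sum_j \sum_k \sum_l f i j k l = \sum_k \sum_l \sum_i \sum_j f i j k l.
Proof.
under eq_bigr do rewrite exchange_big.
rewrite exchange_big; apply: eq_bigr => k _.
by under eq_bigr do rewrite exchange_big; rewrite exchange_big.
Qed.

Lemma sum_enum_val (R : nmodType) (T : finType) (f : T -> R) :
  \sum_(i < #|{: T}|) f (enum_val i) = \sum_x f x.
Proof. by rewrite -big_enum_val; apply: eq_bigl => x; rewrite inE. Qed.

Lemma sum2_addl (R : pzSemiRingType) (I J : finType) (f g h : I -> J -> R) :
  \sum_i \sum_j (f i j + g i j) * h i j =
  \sum_i \sum_j f i j * h i j + \sum_i \sum_j g i j * h i j.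
Proof.
rewrite -big_split; apply: eq_bigr => i _.
by rewrite -big_split; apply: eq_bigr => j _; rewrite mulrDl.
Qed.

Lemma sum2_mull (R : pzSemiRingType) (I J : finType) c (f h : I -> J -> R) :
  \sum_i \sum_j (c * f i j) * h i j = c * \sum_i \sum_j f i j * h i j.
Proof.
rewrite mulr_sumr; apply: eq_bigr => i _.
by rewrite mulr_sumr; apply: eq_bigr => j _; rewrite mulrA.
Qed.

Section PartialTrace.
Variables (C : numClosedFieldType) (F : finFieldType) (N : nat) (A : {set 'I_N}).
Implicit Types (x y : 'rV[F]_N) (l : labels F A).

Definition agree_off x y := [forall j, (j \notin A) ==> (x 0 j == y 0 j)].

Lemma agree_offC x y : agree_off x y = agree_off y x.
Proof. by apply: eq_forallb => j; rewrite eq_sym. Qed.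

Lemma agree_offD x y (z z' : 'rV[F]_N) :
  (forall j, j \notin A -> z 0 j = z' 0 j) -> agree_off (x + z) (y + z') = agree_off x y.
Proof.
move=> zz'; apply: eq_forallb => j; case: (boolP (j \in A)) => //= jA.
by rewrite !mxE zz' // (inj_eq (addIr _)).
Qed.

Lemma restr_agree_off x y : (restr A x == restr A y) && agree_off x y = (x == y).
Proof.
apply/idP/eqP => [/andP[/eqP rxy /forallP axy]|->]; last first.
  by rewrite eqxx; apply/forallP => j; rewrite eqxx implybT.
apply/rowP => j; case: (boolP (j \in A)) => [jA|/(implyP (axy j))/eqP //].
by have := congr1 (fun l : labels F A => l (exist _ j jA)) rxy; rewrite !ffunE.
Qed.

Definition ext l : 'rV[F]_N :=
  \row_j (if @insub _ (fun j => j \in A) _ j is Some i then l i else 0).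

Lemma ext_val l (i : {j | j \in A}) : ext l 0 (val i) = l i.
Proof.
by rewrite mxE; case: insubP => [i' _ /val_inj -> | ]; rewrite ?(valP i).
Qed.

Lemma restr_subr_ext_restr x (c : 'rV[F]_N) :
  restr A (ext (restr A x) - c) = restr A (x - c).
Proof. by apply/ffunP => i; rewrite !ffunE [LHS]mxE [RHS]mxE ext_val ffunE. Qed.

Lemma restr_subr_ext_inj (c : 'rV[F]_N) : injective (fun l => restr A (ext l - c)).
Proof.
move=> l l' /ffunP eq_ll'; apply/ffunP => i.
by have := eq_ll' i; rewrite !ffunE [LHS]mxE [RHS]mxE !ext_val => /addIr.
Qed.

Definition mask_mx : 'M[F]_N := diag_mx (\row_j (j \in A)%:R).

Lemma mulmx_mask x j : (x *m mask_mx) 0 j = if j \in A then x 0 j else 0.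
Proof. by rewrite mul_mx_diag !mxE; case: (j \in A); rewrite ?mulr1 ?mulr0. Qed.

Lemma ext_restr x : ext (restr A x) = x *m mask_mx.
Proof.
apply/rowP => j; rewrite mulmx_mask mxE.
by case: insubP => [i jA <- | /negbTE -> //]; rewrite ffunE (valP i).
Qed.

Lemma restr_add_vanishing x (z : 'rV[F]_N) :
  (forall j, j \in A -> z 0 j = 0) -> restr A (x + z) = restr A x.
Proof. by move=> z0; apply/ffunP => i; rewrite !ffunE mxE z0 ?addr0 // (valP i). Qed.

Lemma ptraceE (sigma : 'rV[F]_N -> 'rV[F]_N -> C) l l' :
  @ptrace C F N A sigma l l' = \sum_x \sum_y sigma x y *
     ((restr A x == l)%:R * ((restr A y == l')%:R * (agree_off x y)%:R)).
Proof.
rewrite /ptrace big_mkcond; apply: eq_bigr => x _.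
case: eqP => _; last by rewrite big1 // => y _; rewrite mul0r mulr0.
rewrite big_mkcond; apply: eq_bigr => y _; rewrite /agree_off.
by case: eqP => _; case: forallP => _ /=; rewrite ?mulr1 ?mulr0 ?mul0r.
Qed.

Lemma kraus_apply_ptrace (S : finType) m (K : 'I_m -> S -> labels F A -> C)
    (sigma : 'rV[F]_N -> 'rV[F]_N -> C) s t :
  kraus_apply K (@ptrace C F N A sigma) s t = \sum_x \sum_y sigma x y *
    ((agree_off x y)%:R * \sum_i K i s (restr A x) * (K i t (restr A y))^*).
Proof.
transitivity (\sum_i \sum_x \sum_y sigma x y *
    ((agree_off x y)%:R * (K i s (restr A x) * (K i t (restr A y))^*))); last first.
  rewrite exchange_big; apply: eq_bigr => x _; rewrite exchange_big.
  by apply: eq_bigr => y _; rewrite !mulr_sumr.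
apply: eq_bigr => i _.
transitivity (\sum_l \sum_l' \sum_x \sum_y (l == restr A x)%:R * ((l' == restr A y)%:R *
    (sigma x y * ((agree_off x y)%:R * (K i s l * (K i t l')^*))))).
  apply: eq_bigr => l _; apply: eq_bigr => l' _.
  rewrite ptraceE mulr_sumr mulr_suml; apply: eq_bigr => x _.
  rewrite mulr_sumr mulr_suml; apply: eq_bigr => y _.
  by rewrite [restr A x == l]eq_sym [restr A y == l']eq_sym; ring.
rewrite exchange_big_pair; apply: eq_bigr => x _; apply: eq_bigr => y _.
by under eq_bigr do rewrite -mulr_sumr sum_delta; rewrite sum_delta.
Qed.

End PartialTrace.

Section Encoding.
Variables (C : numClosedFieldType) (F : finFieldType) (n k f1 e : nat).
Variables (GS : 'M[F]_(k, n)) (G1 : 'M[F]_(f1, n)) (GE : 'M[F]_(e, n)).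
Implicit Types (s t : 'rV[F]_k) (x y : 'rV[F]_(n + e)).

Definition codeword s (r1 : 'rV[F]_f1) (r2 : 'rV[F]_e) : 'rV[F]_(n + e) :=
  row_mx (s *m GS + r1 *m G1 + r2 *m GE) r2.

Lemma codewordD s r1 r2 s' r1' r2' :
  codeword (s + s') (r1 + r1') (r2 + r2') = codeword s r1 r2 + codeword s' r1' r2'.
Proof.
rewrite /codeword !mulmxDl add_row_mx; congr row_mx.
by apply/rowP => j; rewrite !mxE; ring.
Qed.

Lemma codewordB s r1 r2 s' r1' r2' :
  codeword (s - s') (r1 - r1') (r2 - r2') = codeword s r1 r2 - codeword s' r1' r2'.
Proof.
rewrite /codeword !mulmxBl opp_row_mx add_row_mx; congr row_mx.
by apply/rowP => j; rewrite !mxE; ring.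
Qed.

Lemma ecss_amp_sum s (H : 'rV[F]_(n + e) -> C) :
  \sum_x ecss_amp C GS G1 GE s x * H x = \sum_r1 \sum_r2 H (codeword s r1 r2).
Proof.
rewrite /ecss_amp.
under eq_bigr do rewrite mulr_suml; rewrite exchange_big; apply: eq_bigr => r1 _.
under eq_bigr do rewrite mulr_suml; rewrite exchange_big; apply: eq_bigr => r2 _.
exact: sum_delta.
Qed.

Lemma conj_ecss_amp s x : (ecss_amp C GS G1 GE s x)^* = ecss_amp C GS G1 GE s x.
Proof.
rewrite /ecss_amp rmorph_sum; apply: eq_bigr => r1 _.
by rewrite rmorph_sum; apply: eq_bigr => r2 _; exact: conjC_nat.
Qed.

Let nu : C := ((#|F|%:R : C) ^+ (f1 + e))^-1.

Lemma ecss_enc_sum rho (G : 'rV[F]_(n + e) -> 'rV[F]_(n + e) -> C) :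
  \sum_x \sum_y ecss_enc GS G1 GE rho x y * G x y =
  nu * \sum_s \sum_t rho s t *
     \sum_r1 \sum_r2 \sum_r1' \sum_r2' G (codeword s r1 r2) (codeword t r1' r2').
Proof.
rewrite /ecss_enc -/nu.
transitivity (nu * \sum_x \sum_y \sum_s \sum_t rho s t *
    (ecss_amp C GS G1 GE s x * (ecss_amp C GS G1 GE t y * G x y))).
  rewrite mulr_sumr; apply: eq_bigr => x _; rewrite mulr_sumr; apply: eq_bigr => y _.
  rewrite -mulrA mulr_suml; congr (_ * _); apply: eq_bigr => s _.
  by rewrite mulr_suml; apply: eq_bigr => t _; rewrite conj_ecss_amp; ring.
rewrite exchange_big_pair; congr (_ * _); apply: eq_bigr => s _; apply: eq_bigr => t _.
under eq_bigr do rewrite -mulr_sumr; rewrite -mulr_sumr; congr (_ * _).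
under eq_bigr do rewrite -mulr_sumr; rewrite ecss_amp_sum.
by do 2![apply: eq_bigr => ? _]; rewrite ecss_amp_sum.
Qed.

Lemma sum_shift_eq_pairs (a b : 'rV[F]_f1) (c d : 'rV[F]_e) :
  \sum_r1 \sum_r2 \sum_r1' \sum_r2' (r1 - a == r1' - b)%:R * (r2 - c == r2' - d)%:R =
  (#|F| ^ (f1 + e))%:R :> C.
Proof.
transitivity (\sum_r1 \sum_r1' (r1 - a == r1' - b)%:R *
              \sum_r2 \sum_r2' (r2 - c == r2' - d)%:R :> C).
  apply: eq_bigr => r1 _; rewrite exchange_big; apply: eq_bigr => r1' _.
  by rewrite mulr_sumr; apply: eq_bigr => r2 _; rewrite mulr_sumr.
under eq_bigr do rewrite -mulr_suml; rewrite -mulr_suml.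
by rewrite !sum_shift_eq !card_mx !mul1n -natrM expnD.
Qed.

Variable A : {set 'I_(n + e)}.
Implicit Type l : labels F A.

Definition share_pairs s t l l' : C :=
  \sum_r1 \sum_r2 \sum_r1' \sum_r2'
    (restr A (codeword s r1 r2) == l)%:R * ((restr A (codeword t r1' r2') == l')%:R *
      (agree_off A (codeword s r1 r2) (codeword t r1' r2'))%:R).

Lemma ptrace_ecss_enc rho l l' :
  @ptrace C F _ A (ecss_enc GS G1 GE rho) l l' =
  nu * \sum_s \sum_t rho s t * share_pairs s t l l'.
Proof. by rewrite ptraceE ecss_enc_sum. Qed.

Lemma kraus_apply_ecss_enc m (K : 'I_m -> 'rV[F]_k -> labels F A -> C) rho s t :
  kraus_apply K (@ptrace C F _ A (ecss_enc GS G1 GE rho)) s t =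
  nu * \sum_s' \sum_t' rho s' t' * \sum_r1 \sum_r2 \sum_r1' \sum_r2'
    (agree_off A (codeword s' r1 r2) (codeword t' r1' r2'))%:R *
    \sum_i K i s (restr A (codeword s' r1 r2)) * (K i t (restr A (codeword t' r1' r2')))^*.
Proof. by rewrite kraus_apply_ptrace ecss_enc_sum. Qed.

Section Recovery.
Variables (Q : 'M[F]_(n + e, k)) (L1 : 'M[F]_(k, f1)) (L2 : 'M[F]_(k, e)).
Let correction s := codeword s (s *m L1) (s *m L2).
Hypothesis decode : forall s r1 r2, ext (restr A (codeword s r1 r2)) *m Q = s.
Hypothesis correction_off : forall s j, j \notin A -> correction s 0 j = 0.
Hypothesis codeword0_inj :
  forall r1 r2 r1' r2', codeword 0 r1 r2 = codeword 0 r1' r2' -> r1 = r1' /\ r2 = r2'.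

(* Read the secret s off the shares l, then subtract the correction codeword of
   s; the residue h no longer depends on the secret and is discarded. *)
Definition recovery_op (h : labels F A) s l : C :=
  ((h == restr A (ext l - correction s)) && (ext l *m Q == s))%:R.

Definition recovery (i : 'I_#|{: labels F A}|) := recovery_op (enum_val i).

Lemma recovery_tp : kraus_tp recovery.
Proof.
move=> l l'; rewrite (sum_enum_val (fun h => \sum_s (recovery_op h s l)^* * recovery_op h s l')).
transitivity (\sum_s (s == ext l *m Q)%:R * ((restr A (ext l - correction s) ==
    restr A (ext l' - correction s)) && (ext l' *m Q == s))%:R :> C).
  rewrite exchange_big; apply: eq_bigr => s _.
  rewrite -natrM mulnb -(sum_delta (restr A (ext l - correction s)) (fun h =>
    ((s == ext l *m Q) && ((h == restr A (ext l' - correction s)) && (ext l' *m Q == s)))%:R)).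
  apply: eq_bigr => h _; rewrite /recovery_op conjC_nat -!natrM !mulnb.
  by rewrite [s == _]eq_sym -!andbA.
rewrite sum_delta (inj_eq (@restr_subr_ext_inj _ _ A _)).
by case: eqP => [->|]; rewrite ?eqxx.
Qed.

Lemma recovery_pair s t s' t' r1 r2 r1' r2' :
  (agree_off A (codeword s' r1 r2) (codeword t' r1' r2'))%:R *
    \sum_i recovery i s (restr A (codeword s' r1 r2)) *
           (recovery i t (restr A (codeword t' r1' r2')))^* =
  (s' == s)%:R * ((t' == t)%:R *
    ((r1 - s' *m L1 == r1' - t' *m L1)%:R * (r2 - s' *m L2 == r2' - t' *m L2)%:R)) :> C.
Proof.
set x := codeword s' r1 r2; set y := codeword t' r1' r2'.
rewrite (sum_enum_val (fun h => recovery_op h s (restr A x) * (recovery_op h t (restr A y))^*)).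
have -> : \sum_h recovery_op h s (restr A x) * (recovery_op h t (restr A y))^* =
    ((s' == s) && (t' == t) &&
     (restr A (x - correction s) == restr A (y - correction t)))%:R.
  rewrite -(sum_delta (restr A (x - correction s)) (fun h => ((s' == s) && (t' == t) &&
    (h == restr A (y - correction t)))%:R)); apply: eq_bigr => h _.
  rewrite /recovery_op !decode !restr_subr_ext_restr conjC_nat -!natrM !mulnb.
  by case: (h == restr A (x - _)); case: (h == restr A (y - _)); case: (s' == s); case: (t' == t).
have [<-|_] := eqVneq s' s; last by rewrite mulr0 !mul0r.
have [<-|_] := eqVneq t' t; last by rewrite andbF mulr0 !mul0r mulr0.
have xE : x - correction s' = codeword 0 (r1 - s' *m L1) (r2 - s' *m L2).
  by rewrite -codewordB subrr.
have yE : y - correction t' = codeword 0 (r1' - t' *m L1) (r2' - t' *m L2).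
  by rewrite -codewordB subrr.
rewrite -{1}(subrK (correction s') x) -{1}(subrK (correction t') y) agree_offD; last first.
  by move=> j jA; rewrite !correction_off.
rewrite xE yE -natrM mulnb andbC restr_agree_off !mul1r -natrM mulnb.
by congr ((nat_of_bool _)%:R); apply/eqP/andP => [/codeword0_inj[-> ->] | [/eqP-> /eqP->]].
Qed.

Lemma recovery_correct rho s t :
  kraus_apply recovery (@ptrace C F _ A (ecss_enc GS G1 GE rho)) s t = rho s t.
Proof.
rewrite kraus_apply_ecss_enc.
transitivity (nu * \sum_s' \sum_t' rho s' t' *
    ((s' == s)%:R * ((t' == t)%:R * (#|F| ^ (f1 + e))%:R))).
  congr (_ * _); apply: eq_bigr => s' _; apply: eq_bigr => t' _; congr (_ * _).
  rewrite -(sum_shift_eq_pairs (s' *m L1) (t' *m L1) (s' *m L2) (t' *m L2)) !mulr_sumr.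
  apply: eq_bigr => r1 _; rewrite !mulr_sumr; apply: eq_bigr => r2 _.
  rewrite !mulr_sumr; apply: eq_bigr => r1' _; rewrite !mulr_sumr; apply: eq_bigr => r2' _.
  exact: recovery_pair.
under eq_bigr do (under eq_bigr do rewrite mulrCA; rewrite -mulr_sumr).
rewrite sum_delta; under eq_bigr do rewrite mulrCA; rewrite sum_delta.
have qn0 : (#|F|%:R : C) != 0 by rewrite pnatr_eq0 -lt0n; apply/card_gt0P; exists 0.
by rewrite /nu natrX mulrCA mulVf ?mulr1 // expf_neq0.
Qed.

Lemma authorized_of_recovery : authorized C GS G1 GE A.
Proof.
exists #|{: labels F A}|, recovery.
by split=> [|rho _ s t]; [apply: recovery_tp | apply: recovery_correct].
Qed.

End Recovery.

Lemma authorized_ptrace_inj rho1 rho2 :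
  authorized C GS G1 GE A -> is_density rho1 -> is_density rho2 ->
  (forall l l', @ptrace C F _ A (ecss_enc GS G1 GE rho1) l l' =
                @ptrace C F _ A (ecss_enc GS G1 GE rho2) l l') ->
  forall s t, rho1 s t = rho2 s t.
Proof.
move=> [m [K [_ recover]]] dens1 dens2 same s t.
rewrite -(recover rho1) // -(recover rho2) //; apply: eq_bigr => i _.
by do 2![apply: eq_bigr => ? _]; rewrite same.
Qed.

Definition ket_bra (a b : 'rV[F]_k) s t : C := ((s == a) && (t == b))%:R.

Lemma sum_ket_bra (f : 'rV[F]_k -> 'rV[F]_k -> C) a b :
  \sum_s \sum_t ket_bra a b s t * f s t = f a b.
Proof.
transitivity (\sum_s (s == a)%:R * \sum_t (t == b)%:R * f s t).
  apply: eq_bigr => s _; rewrite mulr_sumr; apply: eq_bigr => t _.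
  by rewrite /ket_bra -mulnb natrM mulrA.
by rewrite sum_delta sum_delta.
Qed.

Lemma trace_ket_bra a b : \sum_s ket_bra a b s s = (a == b)%:R.
Proof.
rewrite -(sum_delta a (fun s => (s == b)%:R)); apply: eq_bigr => s _.
by rewrite /ket_bra -natrM mulnb.
Qed.

Lemma quad_formE (rho : 'rV[F]_k -> 'rV[F]_k -> C) (w : 'rV[F]_k -> C) :
  \sum_s \sum_t (w s)^* * rho s t * w t = \sum_s \sum_t rho s t * ((w s)^* * w t).
Proof. by do 2![apply: eq_bigr => ? _]; rewrite mulrAC mulrC. Qed.

Lemma is_density_ket_bra a : is_density (ket_bra a a).
Proof.
split=> [w|]; last by rewrite trace_ket_bra eqxx.
by rewrite quad_formE sum_ket_bra mulrC mul_conjC_ge0.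
Qed.

Lemma not_authorized_invisible d d1 d2 : d != 0 ->
  (forall j, j \in A -> codeword d d1 d2 0 j = 0) -> ~ authorized C GS G1 GE A.
Proof.
move=> dn0 invisible auth.
set z := codeword d d1 d2.
have shift r1 r2 : codeword d (r1 + d1) (r2 + d2) = codeword 0 r1 r2 + z.
  by rewrite -codewordD add0r.
have share_pairs_shift l l' : share_pairs d d l l' = share_pairs 0 0 l l'.
  rewrite /share_pairs (reindex_inj (addIr d1)); apply: eq_bigr => r1 _.
  rewrite (reindex_inj (addIr d2)); apply: eq_bigr => r2 _.
  rewrite (reindex_inj (addIr d1)); apply: eq_bigr => r1' _.
  rewrite (reindex_inj (addIr d2)); apply: eq_bigr => r2' _.
  by rewrite !shift !restr_add_vanishing // agree_offD.
have same_shares l l' : @ptrace C F _ A (ecss_enc GS G1 GE (ket_bra d d)) l l' =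
                        @ptrace C F _ A (ecss_enc GS G1 GE (ket_bra 0 0)) l l'.
  by rewrite !ptrace_ecss_enc !sum_ket_bra share_pairs_shift.
have := authorized_ptrace_inj auth (is_density_ket_bra d) (is_density_ket_bra 0) same_shares 0 0.
by rewrite /ket_bra eqxx eq_sym (negbTE dn0) => /eqP; rewrite eq_sym oner_eq0.
Qed.

(* Without a pair of codewords of secrets 0 and d agreeing outside A, the
   coherence between |0> and |d> is traced out: A cannot tell the superposition
   (|0> + |d>)/sqrt 2 from the mixture of |0> and |d>. *)
Lemma not_authorized_dephased d : d != 0 ->
  (forall r1 r2 r1' r2', ~~ agree_off A (codeword 0 r1 r2) (codeword d r1' r2')) ->
  ~ authorized C GS G1 GE A.
Proof.
move=> dn0 dephased auth.
pose half : C := 2%:R^-1.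
have half_ge0 : 0 <= half by rewrite invr_ge0 ler0n.
have trace_half : half * (1 + 1) = 1 by rewrite -[1 + 1]/(2%:R : C) mulVf ?pnatr_eq0.
pose coherent s t := half * (ket_bra 0 0 s t + ket_bra d d s t + ket_bra 0 d s t + ket_bra d 0 s t).
pose mixed s t := half * (ket_bra 0 0 s t + ket_bra d d s t).
have d0F : (0 == d) = false by rewrite eq_sym (negbTE dn0).
have dens_coherent : is_density coherent.
  split=> [w|]; last first.
    by rewrite -mulr_sumr !big_split /= !trace_ket_bra !eqxx d0F eq_sym d0F !addr0 trace_half.
  rewrite quad_formE sum2_mull !sum2_addl !sum_ket_bra.
  have -> : (w 0)^* * w 0 + (w d)^* * w d + (w 0)^* * w d + (w d)^* * w 0 =
            (w 0 + w d) * (w 0 + w d)^* by rewrite rmorphD; ring.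
  by rewrite mulr_ge0 ?mul_conjC_ge0.
have dens_mixed : is_density mixed.
  split=> [w|]; last by rewrite -mulr_sumr big_split /= !trace_ket_bra !eqxx trace_half.
  rewrite quad_formE sum2_mull sum2_addl !sum_ket_bra.
  by rewrite mulr_ge0 // addr_ge0 // mulrC mul_conjC_ge0.
have no_pairs l l' : share_pairs 0 d l l' = 0 /\ share_pairs d 0 l l' = 0.
  split; rewrite /share_pairs big1 // => r1 _; rewrite big1 // => r2 _;
    rewrite big1 // => r1' _; rewrite big1 // => r2' _.
    by rewrite (negbTE (dephased _ _ _ _)) !mulr0.
  by rewrite agree_offC (negbTE (dephased _ _ _ _)) !mulr0.
have same_shares l l' : @ptrace C F _ A (ecss_enc GS G1 GE coherent) l l' =
                        @ptrace C F _ A (ecss_enc GS G1 GE mixed) l l'.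
  rewrite !ptrace_ecss_enc !sum2_mull !sum2_addl !sum_ket_bra.
  by have [-> ->] := no_pairs l l'; rewrite !addr0.
have := authorized_ptrace_inj auth dens_coherent dens_mixed same_shares 0 d.
rewrite /coherent /mixed /ket_bra !eqxx d0F (negbTE dn0) /= !addr0 add0r mulr0 mulr1.
by move/eqP; rewrite invr_eq0 pnatr_eq0.
Qed.

End Encoding.

Section Parties.
Variables (F : finFieldType) (n u v : nat) (J : {set 'I_n}).
Local Notation A := (parties_Ju u v J).

Lemma lshift_in_parties_Ju j : (lshift (u + v) j \in A) = (j \in J).
Proof.
rewrite inE mem_imset; last exact: lshift_inj.
case: (j \in J) => //=; apply/imsetP => -[i _ /(congr1 val) /=].
by have := ltn_ord j; lia.
Qed.

Lemma U_in_parties_Ju i : rshift n (lshift v i) \in A.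
Proof. by rewrite inE; apply/orP; right; apply: imset_f. Qed.

Lemma V_notin_parties_Ju i : rshift n (rshift u i) \notin A.
Proof.
rewrite inE negb_or; apply/andP.
by split; apply/imsetP => -[j _ /(congr1 val) /=]; have := ltn_ord j; lia.
Qed.

Lemma vanish_on_parties_Ju (c : 'rV[F]_n) (a : 'rV[F]_u) (b : 'rV[F]_v) :
  (forall j, j \in A -> row_mx c (row_mx a b) 0 j = 0) <->
  (forall j, j \in J -> c 0 j = 0) /\ a = 0.
Proof.
split=> [vanish | [c0 ->] j].
  split=> [j jJ|].
    by have := vanish (lshift _ j); rewrite lshift_in_parties_Ju row_mxEl; apply.
  by apply/rowP => i; have := vanish _ (U_in_parties_Ju i); rewrite row_mxEr row_mxEl mxE; apply.
case: (split_ordP j) => [j0 ->|j1 ->]; first by rewrite lshift_in_parties_Ju row_mxEl; apply: c0.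
case: (split_ordP j1) => [i ->|i ->]; first by rewrite !row_mxEr row_mxEl mxE.
by rewrite (negbTE (V_notin_parties_Ju i)).
Qed.

Lemma vanish_off_parties_Ju (c : 'rV[F]_n) (a : 'rV[F]_u) (b : 'rV[F]_v) :
  (forall j, j \notin A -> row_mx c (row_mx a b) 0 j = 0) <->
  (forall j, j \notin J -> c 0 j = 0) /\ b = 0.
Proof.
split=> [vanish | [c0 ->] j].
  split=> [j jJ|].
    by have := vanish (lshift _ j); rewrite lshift_in_parties_Ju row_mxEl; apply.
  by apply/rowP => i; have := vanish _ (V_notin_parties_Ju i); rewrite !row_mxEr mxE; apply.
case: (split_ordP j) => [j0 ->|j1 ->]; first by rewrite lshift_in_parties_Ju row_mxEl; apply: c0.
case: (split_ordP j1) => [i ->|i ->]; last by rewrite !row_mxEr mxE.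
by rewrite U_in_parties_Ju.
Qed.

End Parties.

Section ExtendedCSS.
Variables (F : finFieldType) (n f0 f1 u v : nat).
Variables (GS : 'M[F]_(f0 - f1, n)) (G1 : 'M[F]_(f1, n)).
Variables (GU : 'M[F]_(u, n)) (GV : 'M[F]_(v, n)).
Hypothesis free : row_free (col_mx GS G1).
Hypothesis cap0 : (col_mx GS G1 :&: col_mx GU GV == (0 : 'M[F]_n))%MS.
Local Notation k := (f0 - f1)%N.
Local Notation GE := (col_mx GU GV).
Local Notation codeword := (codeword GS G1 GE).
Local Notation secret_words := (code_diff (col_mx GS G1 + GV)%MS (G1 + GV)%MS).
Local Notation phase_words := (code_diff (dual (G1 + GU)%MS) (dual (col_mx GS G1 + GU)%MS)).

Lemma F0_coefs_eq0 (d : 'rV[F]_k) (d1 : 'rV[F]_f1) (b : 'rV[F]_(u + v)) :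
  d *m GS + d1 *m G1 = b *m GE -> d = 0 /\ d1 = 0.
Proof.
move=> in_E.
have : (row_mx d d1 *m col_mx GS G1 <= (0 : 'M_n))%MS.
  by rewrite -(eqmxP cap0) sub_capmx submxMl mul_row_col in_E submxMl.
rewrite submx0 -(mul0mx _ (col_mx GS G1)) => /eqP /(row_free_inj free).
by rewrite -row_mx0 => /eq_row_mx.
Qed.

Lemma codeword0_inj r1 r2 r1' r2' :
  codeword 0 r1 r2 = codeword 0 r1' r2' -> r1 = r1' /\ r2 = r2'.
Proof.
rewrite /codeword => /eq_row_mx [+ r2E]; rewrite r2E !mul0mx !add0r => /addIr eq_r1.
split=> //; have : row_mx 0 r1 *m col_mx GS G1 = row_mx 0 r1' *m col_mx GS G1.
  by rewrite !mul_row_col !mul0mx !add0r.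
by move/(row_free_inj free)/eq_row_mx => [_ ->].
Qed.

Lemma secret_eq0_of_vanishing J s r1 r2 : meets_supports J secret_words ->
  (forall j, j \in parties_Ju u v J -> codeword s r1 r2 0 j = 0) -> s = 0.
Proof.
move=> meets; rewrite /codeword -[r2]hsubmxK => /vanish_on_parties_Ju[vanish a0].
move: vanish; rewrite a0 mul_row_col mul0mx add0r => vanish.
have inF0V : ((s *m GS + r1 *m G1 + rsubmx r2 *m GV)%R <= col_mx GS G1 + GV)%MS.
  by rewrite -(mul_row_col s r1) addmx_sub_adds ?submxMl.
case/sub_addsmxP: (meets_code_diff_sub meets vanish inF0V) => [[p1 p2] /= def].
have : s *m GS + (r1 - p1) *m G1 = row_mx 0 (p2 - rsubmx r2) *m GE.
  rewrite mul_row_col mul0mx add0r; apply/eqP; rewrite -subr_eq0; apply/eqP.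
  have -> : s *m GS + (r1 - p1) *m G1 - (p2 - rsubmx r2) *m GV =
            (s *m GS + r1 *m G1 + rsubmx r2 *m GV) - (p1 *m G1 + p2 *m GV).
    by rewrite !mulmxBl; apply/rowP => j; rewrite !mxE; ring.
  by rewrite def subrr.
by case/F0_coefs_eq0.
Qed.

Lemma decoder_exists J : meets_supports J secret_words ->
  exists Q : 'M[F]_(n + (u + v), k),
    forall s r1 r2, ext (restr (parties_Ju u v J) (codeword s r1 r2)) *m Q = s.
Proof.
move=> meets; set A := parties_Ju u v J.
pose G : 'M[F]_(k + f1 + (u + v), n + (u + v)) :=
  col_mx (col_mx (row_mx GS 0) (row_mx G1 0)) (row_mx GE 1%:M).
pose T : 'M[F]_(k + f1 + (u + v), k) := col_mx (col_mx 1%:M 0) 0.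
(* Q exists as soon as every (s, r1, r2) whose codeword vanishes on A has s = 0. *)
have GE s r1 r2 : row_mx (row_mx s r1) r2 *m G = codeword s r1 r2.
  by rewrite /G /codeword !mul_row_col !mul_mx_row !mulmx0 mulmx1 !add_row_mx !addr0 add0r.
have TE s r1 r2 : row_mx (row_mx s r1) r2 *m T = s.
  by rewrite /T !mul_row_col !mulmx0 mulmx1 !addr0.
have [Q GQ] : exists Q, G *m mask_mx F A *m Q = T.
  apply: mulmx_solvable; apply/rV_subP => w /sub_kermxP.
  rewrite -[w]hsubmxK -[lsubmx w]hsubmxK mulmxA GE => vanish.
  apply/sub_kermxP; rewrite TE.
  apply: (secret_eq0_of_vanishing (r1 := rsubmx (lsubmx w)) (r2 := rsubmx w) meets) => j jA.
  have := congr1 (fun x : 'rV[F]_(n + (u + v)) => x 0 j) vanish.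
  by rewrite mulmx_mask jA => ->; rewrite mxE.
by exists Q => s r1 r2; rewrite ext_restr -GE -!mulmxA (mulmxA G) GQ TE.
Qed.

Lemma correction_exists J : meets_supports J phase_words ->
  exists L1 L2, forall s j, j \notin parties_Ju u v J ->
    codeword s (s *m L1) (s *m L2) 0 j = 0.
Proof.
move=> meets; pose P := mask_mx F (~: J).
have maskP (x : 'rV[F]_n) j : (x *m P) 0 j = if j \in J then 0 else x 0 j.
  by rewrite mulmx_mask inE; case: (j \in J).
(* The dual form of the phase condition: outside J, the rows of GS lie in the
   span of the rows of G1 and GU. *)
have /submxP[D defGS] : (GS *m P <= col_mx G1 GU *m P)%MS.
  rewrite -sub_kermx_tr; apply/rV_subP => w /sub_kermxP.
  rewrite !trmx_mul tr_diag_mx mulmxA => orth; apply/sub_kermxP; rewrite mulmxA.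
  set y := w *m _ in orth *.
  have y_dual : (y <= dual (G1 + GU)%MS)%MS.
    by apply: submx_trans (kermx_trS _); [apply/sub_kermxP; exact: orth | rewrite addsmxE].
  have y0 j : j \in J -> y 0 j = 0 by rewrite /y -/P maskP => ->.
  apply/sub_kermxP; apply: submx_trans (meets_code_diff_sub meets y0 y_dual) (kermx_trS _).
  by apply: submx_trans (addsmxSl _ GU); rewrite -addsmxE addsmxSl.
pose M := GS - lsubmx D *m G1 - rsubmx D *m GU.
have M_on_J : M *m P = 0.
  move: defGS; rewrite mulmxA -[D]hsubmxK mul_row_col mulmxDl => defGS.
  by rewrite /M !mulmxBl -!mulmxA defGS !mulmxA addrAC addrK subrr.
exists (- lsubmx D), (row_mx (- rsubmx D) 0) => s j.
rewrite /codeword mul_mx_row mulmx0; move: j; apply/vanish_off_parties_Ju; split=> // j jJ.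
have -> : s *m GS + s *m - lsubmx D *m G1 + row_mx (s *m - rsubmx D) 0 *m GE = s *m M.
  by rewrite mul_row_col mul0mx addr0 /M !mulmxBr !mulmxA !mulmxN !mulNmx.
have := congr1 (fun x : 'rV[F]_n => x 0 j) (congr1 (mulmx s) M_on_J).
by rewrite /= mulmxA maskP (negbTE jJ) mulmx0 => ->; rewrite mxE.
Qed.

Lemma meets_secret_of_authorized C J :
  authorized C GS G1 GE (parties_Ju u v J) -> meets_supports J secret_words.
Proof.
move=> auth c /andP[/sub_addsmxP[[w b] /= defc] notF1V].
apply/negP => /subset_compl_suppP vanish; move: defc; rewrite -[w]hsubmxK mul_row_col => defc.
have d0 : lsubmx w != 0.
  by apply: contra notF1V => /eqP d0; rewrite defc d0 mul0mx add0r addmx_sub_adds ?submxMl.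
apply: (not_authorized_invisible (d1 := rsubmx w) (d2 := row_mx 0 b) d0 _ auth).
rewrite /codeword; apply/vanish_on_parties_Ju; split=> //.
by rewrite mul_row_col mul0mx add0r -defc.
Qed.

Lemma meets_phase_of_authorized C J :
  authorized C GS G1 GE (parties_Ju u v J) -> meets_supports J phase_words.
Proof.
move=> auth y /andP[y_dual notF0U]; apply/negP => /subset_compl_suppP vanish.
have orth m (X : 'M[F]_(m, n)) : (X <= G1 + GU)%MS -> y *m X^T = 0.
  by move=> sX; apply/sub_kermxP; exact: submx_trans y_dual (kermx_trS sX).
have yG1 := orth _ _ (addsmxSl G1 GU); have yGU := orth _ _ (addsmxSr G1 GU).
have /rV0Pn[i yGSi] : y *m GS^T != 0.
  apply: contra notF0U => /eqP yGS.
  have sub : (col_mx GS G1 + GU <= col_mx (col_mx GS G1) GU)%MS by rewrite addsmxE.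
  apply: submx_trans (kermx_trS sub); apply/sub_kermxP.
  by rewrite !tr_col_mx !mul_mx_row yGS yG1 yGU !row_mx0.
pose d : 'rV[F]_k := delta_mx 0 i.
have d0 : d != 0 by apply/rV0Pn; exists i; rewrite mxE !eqxx oner_eq0.
apply: (not_authorized_dephased d0 _ auth) => r1 r2 r1' r2'; apply/negP => agree.
have : forall j, j \notin parties_Ju u v J -> codeword d (r1' - r1) (r2' - r2) 0 j = 0.
  move=> j jA; rewrite -[d]subr0 codewordB [LHS]mxE [X in _ + X]mxE.
  by apply/eqP; rewrite subr_eq0 eq_sym; move/forallP/(_ j): agree; rewrite jA.
rewrite /codeword -[r2' - r2]hsubmxK => /vanish_off_parties_Ju[c_off b0].
move: c_off; rewrite b0 mul_row_col mul0mx addr0 => /(orth_complementary_supports vanish).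
rewrite !linearD /= !trmx_mul !mulmxA yG1 yGU !mul0mx !addr0 /d trmx_delta -colE.
by move/rowP/(_ 0); rewrite !mxE => yGSi0; rewrite !mxE yGSi0 eqxx in yGSi.
Qed.

Lemma authorized_parties_JuE C J :
  authorized C GS G1 GE (parties_Ju u v J) <->
  meets_supports J secret_words /\ meets_supports J phase_words.
Proof.
split=> [auth | [meetsS meetsP]].
  by split; [apply: meets_secret_of_authorized auth | apply: meets_phase_of_authorized auth].
have [Q decode] := decoder_exists meetsS; have [L1 [L2 correct]] := correction_exists meetsP.
exact: (authorized_of_recovery C decode correct codeword0_inj).
Qed.

Lemma wt_diff_secret_le_dim :
  (f1 < f0)%N -> (wt_diff (col_mx GS G1 + GV)%MS (G1 + GV)%MS <= n)%N.
Proof.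
rewrite -subn_gt0 => k_gt0; pose d : 'rV[F]_k := delta_mx 0 (Ordinal k_gt0).
have d0 : d != 0 by apply/rV0Pn; exists (Ordinal k_gt0); rewrite mxE !eqxx oner_eq0.
apply: leq_trans (wt_diff_le _) (wt_le_dim (d *m GS)); apply/andP; split.
  have -> : d *m GS = row_mx d 0 *m col_mx GS G1 by rewrite mul_row_col mul0mx addr0.
  exact: submx_trans (submxMl _ _) (addsmxSl _ _).
apply/negP => /sub_addsmxP[[a b] /= defGS].
have : d *m GS + (- a) *m G1 = row_mx 0 b *m GE.
  by rewrite mul_row_col mul0mx add0r mulNmx defGS addrC addKr.
by case/F0_coefs_eq0 => /eqP; rewrite (negbTE d0).
Qed.

End ExtendedCSS.

Theorem theorem3 (C : numClosedFieldType) (F : finFieldType) (n f0 f1 u v : nat)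
    (GS : 'M[F]_(f0 - f1, n)) (G1 : 'M[F]_(f1, n))
    (GU : 'M[F]_(u, n)) (GV : 'M[F]_(v, n)) :
  (f1 < f0)%N ->
  row_free (col_mx GS G1) ->
  (col_mx GS G1 :&: col_mx GU GV == (0 : 'M[F]_n))%MS ->
  forall tau : nat, (tau <= n)%N ->
    (forall J : {set 'I_n}, #|J| = tau ->
       authorized C GS G1 (col_mx GU GV) (parties_Ju u v J))
    <-> (tau_u GS G1 GU GV <= tau)%N.
Proof.
move=> lt_f1_f0 free cap0 tau le_tau.
have secret_le := wt_diff_secret_le_dim free cap0 lt_f1_f0.
have [secret_card card_secret] :=
  meets_code_diff_card (col_mx GS G1 + GV)%MS (G1 + GV)%MS le_tau.
have [phase_card card_phase] :=
  meets_code_diff_card (dual (G1 + GU)%MS) (dual (col_mx GS G1 + GU)%MS) le_tau.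
rewrite /tau_u; split=> [auth | le_tau_u J card_J].
  have meets (J : {set 'I_n}) (card_J : #|J| = tau) :=
    proj1 (authorized_parties_JuE free cap0 C J) (auth J card_J).
  have := secret_card (fun J card_J => proj1 (meets J card_J)).
  have := phase_card (fun J card_J => proj2 (meets J card_J)).
  lia.
apply/(authorized_parties_JuE free cap0).
by split; [apply: card_secret | apply: card_phase] => //; lia.
Qed.
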